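(* Let $n\ge2$, $t\in\mathbb{Z}_{\ge0}$ and $\bm{N}=(t,0,\ldots,0,-t)\in\mathbb{Z}^{n+1}$. Then $|\mathcal{S}^+_n(\bm{N})|=J_{n-1,t}$. In particular, for $t\ge\binom{n-1}{2}$, $|\mathcal{S}^+_n(\bm{N})|=(n-1)!$.
   Context: For $\bm{M}=(M_0,\ldots,M_n)\in\mathbb{Z}^{n+1}$ with zero sum, $K_n(\bm{M})$ is the number of integer vectors $(f_{ij})_{0\le i<j\le n}\in\mathbb{Z}_{\ge0}^{\binom{n+1}{2}}$ with $\sum_{j>i} f_{ij}-\sum_{k<i} f_{ki}=M_i$ for all $i$. Let $\bm\delta=(n-1,\ldots,1,0)$; for a weak composition $\bm{j}=(j_0,\ldots,j_{n-1})$ of $\binom n2$, $K_n(\bm{j}-\bm\delta):=K_n(j_0-(n-1),\ldots,j_{n-1}-0,0)$. $\mathcal{S}^+_n(\bm{N})$ is the set of weak compositions $\bm{j}$ of $\binom n2$ with $\binom{N_0+n-1}{j_0}\binom{N_1+n-2}{j_1}\cdots\binom{N_{n-1}}{j_{n-1}}K_n(\bm{j}-\bm\delta)>0$. $J_{m,k}$ is the number of permutations of $\{1,\ldots,m\}$ with at most $k$ inversions. *)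

From HB Require Import structures.
From mathcomp Require Import all_boot all_order all_algebra all_fingroup.
Set Implicit Arguments. Unset Strict Implicit. Unset Printing Implicit Defensive.
Import Order.TTheory GRing.Theory Num.Theory.

(* Binomial coefficient binom(a, k) with integer top a and nat bottom k:
   binom(a,k) = a(a-1)...(a-k+1)/k!.  For a = -(m+1) this equals
   (-1)^k * binom(m+k, k). *)
Definition binomZ (a : int) (k : nat) : int :=
  match a with
  | Posz m => ('C(m, k))%:Z
  | Negz m => ((-1) ^+ k * ('C(m + k, k))%:Z)%R
  end.

(* A bound on every entry of a nonnegative flow with net outflow M on the
   acyclic complete graph 0 < 1 < ... < n (path decomposition):
   f_ij <= sum of positive M_i <= sum |M_i|.  Hence counting in the box
   [0, flow_bound M] is counting all flows. *)
Definition flow_bound n (M : 'I_n.+1 -> int) : nat := (\sum_(i < n.+1) `|M i|)%N.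

Definition is_flow n (M : 'I_n.+1 -> int) (B : nat)
    (f : {ffun 'I_n.+1 * 'I_n.+1 -> 'I_B.+1}) : bool :=
  [forall p : 'I_n.+1 * 'I_n.+1, ~~ (p.1 < p.2)%N ==> (nat_of_ord (f p) == 0)%N] &&
  [forall i : 'I_n.+1,
     ((\sum_(j < n.+1 | (i < j)%N) nat_of_ord (f (i, j)))%:Z
      - (\sum_(k < n.+1 | (k < i)%N) nat_of_ord (f (k, i)))%:Z == M i)%R].

Definition Kostant n (M : 'I_n.+1 -> int) : nat :=
  #|[set f : {ffun 'I_n.+1 * 'I_n.+1 -> 'I_(flow_bound M).+1} | is_flow M f]|.

Definition jminusdelta n (j : nat -> nat) : 'I_n.+1 -> int :=
  fun i => if (i < n)%N then ((j i)%:Z - (n.-1 - i)%:Z)%R else 0%R.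

Definition jnat n c (j : {ffun 'I_n -> 'I_c.+1}) (i : nat) : nat :=
  if (insub i : option 'I_n) is Some k then nat_of_ord (j k) else 0%N.

(* S^+_n(N): weak compositions j = (j_0,..,j_{n-1}) of binom(n,2) (each part is
   automatically <= binom(n,2)) with
   prod_i binom(N_i + n-1-i, j_i) * K_n(j - delta) > 0.
   N is given as a function nat -> int; only N_0..N_{n-1} are used. *)
Definition Splus n (N : nat -> int) : {set {ffun 'I_n -> 'I_('C(n, 2)).+1}} :=
  [set j : {ffun 'I_n -> 'I_('C(n, 2)).+1} |
     ((\sum_(i < n) nat_of_ord (j i))%N == 'C(n, 2)) &&
     (0 < (\prod_(i < n) binomZ (N i + (n.-1 - i)%:Z) (j i))
            * (Kostant (@jminusdelta n (jnat j)))%:Z)%R].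

Definition inv_count m (s : 'S_m) : nat :=
  #|[set p : 'I_m * 'I_m | (p.1 < p.2)%N && (s p.2 < s p.1)%N]|.

Definition Jperm (m k : nat) : nat := #|[set s : 'S_m | (inv_count s <= k)%N]|.

Definition Nvec (n t : nat) (i : nat) : int :=
  if i == 0%N then Posz t else if i == n then (- Posz t)%R else 0%R.

From mathcomp Require Import all_boot all_order all_algebra all_fingroup zify.
Set Implicit Arguments. Unset Strict Implicit. Unset Printing Implicit Defensive.

(* For N = (t, 0, ..., 0, -t) the binomial factors in the definition of
   S^+_n(N) are binom(t + n - 1, j_0) and binom(n - 1 - i, j_i) for i >= 1, so
   they are all positive iff j_0 <= t + n - 1 and j_i <= n - 1 - i.  In that case
   j - delta is nonpositive away from vertex 0 and sums to 0, so a flow out of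
   vertex 0 shows K_n(j - delta) > 0: S^+_n(N) is exactly this box of weak
   compositions of binom(n, 2).  The substitution c_k = n - 2 - k - j_(k+1) maps
   the box bijectively onto the sequences with c_k < n - 1 - k and
   sum c = j_0 - (n - 1) <= t, which are the Lehmer codes of the permutations of
   n - 1 letters with at most t inversions.  The second claim follows because a
   permutation of n - 1 letters has at most binom(n - 1, 2) inversions. *)

Lemma card_ord_ltn m a : a <= m -> #|[set k : 'I_m | k < a]| = a.
Proof.
move=> le_am.
have -> : [set k : 'I_m | k < a] = [set widen_ord le_am k | k in 'I_a].
  apply/setP => k; rewrite inE; apply/idP/imsetP => [lt_ka | [x _ ->]].
    by exists (Ordinal lt_ka) => //; apply: val_inj.
  by rewrite /= ltn_ord.
rewrite card_imset ?card_ord // => x y /(congr1 val) eq_xy.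
exact: val_inj.
Qed.

Lemma card_ord_gtn m (i : 'I_m) : #|[set k : 'I_m | i < k]| = m - i.+1.
Proof.
have := cardC [set k : 'I_m | k < i.+1].
rewrite card_ord card_ord_ltn ?ltn_ord // => card_split.
have -> : #|[set k : 'I_m | i < k]| = #|[predC [set k : 'I_m | k < i.+1]]|.
  by apply: eq_card => k; rewrite !inE ltnNge.
lia.
Qed.

Lemma bin2S m : 'C(m.+1, 2) = 'C(m, 2) + m.
Proof. by rewrite binS bin1. Qed.

Lemma sum_rev_ord m : \sum_(i < m) (m - i.+1) = 'C(m, 2).
Proof. by rewrite -bin2_sum big_rev_mkord subn0. Qed.

Section LehmerCode.
Variable m : nat.
Implicit Types (s : 'S_m) (i : 'I_m) (c : {ffun 'I_m -> 'I_m}).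

Definition lehmer s i : nat := #|[set k : 'I_m | (i < k) && (s k < s i)]|.

Lemma lehmer_lt s i : lehmer s i < m - i.
Proof.
have : lehmer s i <= #|[set k : 'I_m | i < k]|.
  by apply: subset_leq_card; apply/subsetP => k; rewrite !inE => /andP[].
rewrite card_ord_gtn; have := ltn_ord i; lia.
Qed.

Definition lehmer_code s : {ffun 'I_m -> 'I_m} :=
  [ffun i => Ordinal (leq_trans (lehmer_lt s i) (leq_subr i m))].

Lemma lehmer_codeE s i : lehmer_code s i = lehmer s i :> nat.
Proof. by rewrite ffunE. Qed.

Lemma inv_count_lehmer s : inv_count s = \sum_i lehmer s i.
Proof.
rewrite /inv_count -sum1_card.
rewrite (eq_bigl (fun p : 'I_m * 'I_m => (p.1 < p.2) && (s p.2 < s p.1)));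
  last by move=> p; rewrite inE.
rewrite -(pair_big_dep xpredT (fun i j : 'I_m => (i < j) && (s j < s i)) (fun _ _ => 1)) /=.
by apply: eq_bigr => i _; rewrite /lehmer -sum1_card; apply: eq_bigl => k; rewrite inE.
Qed.

Lemma lehmer_values s i :
  lehmer s i = #|[set v : 'I_m | (v < s i) && (i <= (s^-1)%g v)]|.
Proof.
rewrite /lehmer -(card_imset _ (@perm_inj _ s)).
apply: eq_card => v; rewrite inE.
apply/imsetP/idP => [[k] | /andP[lt_v le_iv]].
  by rewrite inE => /andP[lt_ik lt_sk] ->; rewrite permK lt_sk ltnW.
exists ((s^-1)%g v); last by rewrite permKV.
rewrite inE permKV lt_v andbT ltn_neqAle le_iv andbT.
apply/negP => /eqP/val_inj eq_i.
by move: lt_v; rewrite eq_i permKV ltnn.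
Qed.

Lemma lehmer_ltn_agree s s' i :
  (forall k : 'I_m, k < i -> s k = s' k) -> s i < s' i -> lehmer s i < lehmer s' i.
Proof.
move=> agree lt_ss'; rewrite !lehmer_values.
have late_same v : (i <= (s^-1)%g v) = (i <= (s'^-1)%g v).
  have early (a b : 'S_m) : (forall k : 'I_m, k < i -> a k = b k) ->
      (a^-1)%g v < i -> (b^-1)%g v = (a^-1)%g v.
    by move=> eq_ab lt_v; apply: (@perm_inj _ b); rewrite permKV -eq_ab // permKV.
  have agree' (k : 'I_m) : k < i -> s' k = s k by move=> lt_ki; rewrite agree.
  apply/idP/idP => le_v; rewrite leqNgt; apply/negP => lt_v.
    by move: le_v; rewrite (early s' s agree' lt_v) leqNgt lt_v.
  by move: le_v; rewrite (early s s' agree lt_v) leqNgt lt_v.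
apply: proper_card; rewrite properE; apply/andP; split.
  apply/subsetP => v; rewrite !inE late_same => /andP[lt_v ->]; rewrite andbT.
  exact: ltn_trans lt_ss'.
apply/subsetPn; exists (s i); last by rewrite inE ltnn.
by rewrite inE lt_ss' -late_same permK leqnn.
Qed.

Lemma lehmer_code_inj : injective lehmer_code.
Proof.
move=> s s' eq_code.
have eq_lehmer i : lehmer s i = lehmer s' i by rewrite -!lehmer_codeE eq_code.
suff agree k (i : 'I_m) : i < k -> s i = s' i by apply/permP => i; apply: (agree i.+1).
elim: k i => [//|k IHk] i; rewrite ltnS leq_eqVlt => /orP[/eqP eq_ik|]; last exact: IHk.
have agree_i (j : 'I_m) : j < i -> s j = s' j by rewrite eq_ik; apply: IHk.
have agree_i' (j : 'I_m) : j < i -> s' j = s j by move=> lt_ji; rewrite agree_i.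
case: (ltngtP (s i) (s' i)) => [lt_ss'|lt_s's|/val_inj //].
  by have := lehmer_ltn_agree agree_i lt_ss'; rewrite eq_lehmer ltnn.
by have := lehmer_ltn_agree agree_i' lt_s's; rewrite eq_lehmer ltnn.
Qed.

Definition lehmer_codes : {set {ffun 'I_m -> 'I_m}} :=
  [set c : {ffun 'I_m -> 'I_m} | [forall i, c i < m - i]].

Lemma card_lehmer_codes : #|lehmer_codes| = m`!.
Proof.
rewrite -ffactnn ffact_prod.
have -> : #|lehmer_codes| = #|family (fun i : 'I_m => [pred k : 'I_m | k < m - i])|.
  by apply: eq_card => c; rewrite inE; apply/forallP/familyP.
rewrite card_family foldrE big_map big_enum /=; apply: eq_bigr => i _.
rewrite -[RHS](card_ord_ltn (leq_subr i m)); apply: eq_card => k; by rewrite inE.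
Qed.

Lemma imset_lehmer_code : [set lehmer_code s | s : 'S_m] = lehmer_codes.
Proof.
apply/eqP; rewrite eqEcard; apply/andP; split.
  apply/subsetP => c /imsetP[s _ ->]; rewrite inE; apply/forallP => i.
  by rewrite lehmer_codeE lehmer_lt.
by rewrite card_lehmer_codes card_imset ?card_Sn //; apply: lehmer_code_inj.
Qed.

Definition lehmer_codes_le t : {set {ffun 'I_m -> 'I_m}} :=
  [set c in lehmer_codes | \sum_(i < m) c i <= t].

Lemma Jperm_lehmer t : Jperm m t = #|lehmer_codes_le t|.
Proof.
rewrite /Jperm -(card_imset _ lehmer_code_inj).
apply: eq_card => c; rewrite [c \in lehmer_codes_le t]inE.
have weight s : \sum_(i < m) lehmer_code s i = inv_count s.
  by rewrite inv_count_lehmer; apply: eq_bigr => i _; rewrite lehmer_codeE.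
apply/imsetP/andP => [[s] | [code_c weight_c]].
  rewrite inE => inv_s ->; rewrite weight -imset_lehmer_code imset_f //.
move: code_c; rewrite -imset_lehmer_code => /imsetP[s _ eq_c].
by exists s; rewrite // inE -weight -eq_c.
Qed.

Lemma inv_count_le s : inv_count s <= 'C(m, 2).
Proof.
rewrite inv_count_lehmer -sum_rev_ord; apply: leq_sum => i _.
have := lehmer_lt s i; lia.
Qed.

End LehmerCode.

Import Order.TTheory GRing.Theory Num.Theory.

Lemma Posz_sum I (r : seq I) (P : pred I) (F : I -> nat) :
  Posz (\sum_(i <- r | P i) F i) = (\sum_(i <- r | P i) Posz (F i))%R.
Proof. exact: (big_morph Posz PoszD (erefl _)). Qed.

(* The witness is the star flow sending |M_j| units from 0 directly to each j > 0. *)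
Lemma Kostant_gt0 n (M : 'I_n.+1 -> int) :
  (forall i : 'I_n.+1, 0 < i -> (M i <= 0)%R) -> (\sum_i M i = 0)%R -> 0 < Kostant M.
Proof.
move=> M_le0 M_sum0; set B := flow_bound M.
pose g (p : 'I_n.+1 * 'I_n.+1) : nat :=
  if (p.1 == ord0) && (0 < p.2) then `|M p.2|%N else 0.
have g_le p : g p < B.+1.
  rewrite /g; case: ifP => // _.
  by rewrite ltnS /B /flow_bound (bigD1 p.2) //= leq_addr.
have g_out (a b : 'I_n.+1) : a != ord0 -> g (a, b) = 0 by rewrite /g /= => /negbTE ->.
pose f : {ffun 'I_n.+1 * 'I_n.+1 -> 'I_B.+1} := [ffun p => Ordinal (g_le p)].
have fE p : nat_of_ord (f p) = g p by rewrite ffunE.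
have M0 : M ord0 = (- \sum_(j < n.+1 | (0 < j)%N) M j)%R.
  move: M_sum0; rewrite (bigD1 ord0) //= (eq_bigl (fun j : 'I_n.+1 => 0 < j)).
    by move/eqP; rewrite addr_eq0 => /eqP.
  by move=> j; rewrite lt0n.
apply/card_gt0P; exists f; rewrite inE /is_flow; apply/andP; split.
  apply/forallP => p; apply/implyP => not_lt; rewrite fE /g.
  by case: ifP => // /andP[/eqP p1_0]; rewrite p1_0 in not_lt; rewrite (negbTE not_lt).
apply/forallP => i; apply/eqP; case: (unliftP ord0 i) => [k ->|->].
  rewrite big1 => [|j _]; last by rewrite fE g_out.
  rewrite (bigD1 ord0) //= big1 => [|j /andP[_ j_neq0]]; last by rewrite fE g_out.
  by rewrite addn0 fE /g /= sub0r lez0_abs ?opprK // M_le0.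
rewrite [X in (_ - Posz X)%R]big1 ?subr0 => [|j]; last by rewrite ltn0.
rewrite M0 Posz_sum -sumrN; apply: eq_bigr => j j_gt0.
by rewrite fE /g /= j_gt0 lez0_abs // M_le0.
Qed.

Lemma jnat_ord n c (j : {ffun 'I_n -> 'I_c.+1}) (k : 'I_n) : jnat j k = j k.
Proof. by rewrite /jnat; case: insubP => [u _ /val_inj -> // |]; rewrite ltn_ord. Qed.

Section SplusNvec.
Variables m t : nat.
Implicit Types j : {ffun 'I_m.+1 -> 'I_('C(m.+1, 2)).+1}.

Lemma Kostant_jminusdelta_gt0 j :
  \sum_(i < m.+1) j i = 'C(m.+1, 2) -> (forall i : 'I_m.+1, 0 < i -> j i <= m - i) ->
  0 < Kostant (@jminusdelta m.+1 (jnat j)).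
Proof.
move=> j_sum j_le; apply: Kostant_gt0.
  move=> i i_gt0; rewrite /jminusdelta; case: ifP => // lt_im.
  rewrite -[nat_of_ord i]/(nat_of_ord (Ordinal lt_im)) jnat_ord /=.
  by rewrite subr_le0 lez_nat (j_le (Ordinal lt_im)).
rewrite big_ord_recr /= {2}/jminusdelta /= ltnn addr0.
rewrite (eq_bigr (fun i : 'I_m.+1 => Posz (j i) - Posz (m - i))%R); last first.
  move=> i _; rewrite /jminusdelta /= ltn_ord.
  by rewrite -[nat_of_ord i]/(nat_of_ord (widen_ord (leqnSn m.+1) i)) jnat_ord.
have sum_delta : \sum_(i < m.+1) (m - i) = 'C(m.+1, 2).
  by rewrite -sum_rev_ord; apply: eq_bigr => i _; rewrite subSS.
by rewrite sumrB -!Posz_sum j_sum sum_delta subrr.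
Qed.

Definition binom_top (i : 'I_m.+1) : nat := if i == 0 :> nat then t + m else m - i.

Lemma Nvec_binom_top (i : 'I_m.+1) :
  (Nvec m.+1 t i + (m.+1.-1 - i)%:Z)%R = Posz (binom_top i).
Proof.
rewrite /Nvec /binom_top /=; case: eqP => [->|_]; first by rewrite subn0 PoszD.
by rewrite (ltn_eqF (ltn_ord i)) add0r.
Qed.

Definition bounded_compositions : {set {ffun 'I_m.+1 -> 'I_('C(m.+1, 2)).+1}} :=
  [set j : {ffun 'I_m.+1 -> 'I_('C(m.+1, 2)).+1} |
    (\sum_(i < m.+1) j i == 'C(m.+1, 2)) && [forall i, j i <= binom_top i]].

Lemma Splus_Nvec : Splus m.+1 (Nvec m.+1 t) = bounded_compositions.
Proof.
apply/setP => j; rewrite !inE; case: eqP => //= j_sum.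
rewrite (eq_bigr (fun i => Posz 'C(binom_top i, j i))); last first.
  by move=> i _; rewrite Nvec_binom_top.
rewrite -(big_morph Posz PoszM (erefl _)) -PoszM ltz_nat muln_gt0.
apply/andP/forallP => [[prod_gt0 _] i | j_le].
  rewrite leqNgt; apply/negP => lt_top; move: prod_gt0.
  by rewrite (bigD1 i) //= bin_small // mul0n.
split; first by apply: prodn_gt0 => i; rewrite bin_gt0 j_le.
apply: Kostant_jminusdelta_gt0 j_sum _ => i i_gt0.
by have := j_le i; rewrite /binom_top (gtn_eqF i_gt0).
Qed.

End SplusNvec.

Section CompositionsToCodes.
Variables m t : nat.
Implicit Types (j : {ffun 'I_m.+1 -> 'I_('C(m.+1, 2)).+1}) (c : {ffun 'I_m -> 'I_m}).

Lemma code_of_composition_subproof j (k : 'I_m) : m - k.+1 - j (lift ord0 k) < m.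
Proof. have := ltn_ord k; lia. Qed.

Definition code_of_composition j : {ffun 'I_m -> 'I_m} :=
  [ffun k => Ordinal (code_of_composition_subproof j k)].

Definition composition_of_code c : {ffun 'I_m.+1 -> 'I_('C(m.+1, 2)).+1} :=
  [ffun i => inord (if unlift ord0 i is Some k then m - k.+1 - c k
                    else m + \sum_(k < m) c k)].

Lemma code_of_compositionE j k :
  code_of_composition j k = m - k.+1 - j (lift ord0 k) :> nat.
Proof. by rewrite ffunE. Qed.

Lemma bounded_compositionsP j : j \in bounded_compositions m t ->
  [/\ \sum_(i < m.+1) j i = 'C(m.+1, 2), j ord0 <= t + m &
      forall k : 'I_m, j (lift ord0 k) <= m - k.+1].
Proof.
rewrite inE => /andP[/eqP j_sum /forallP j_le]; split=> [//||k]; first exact: j_le ord0.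
by have := j_le (lift ord0 k); rewrite /binom_top lift0.
Qed.

Lemma lehmer_codes_leP c : c \in lehmer_codes_le m t ->
  (forall k : 'I_m, c k < m - k) /\ \sum_(k < m) c k <= t.
Proof. by rewrite !inE => /andP[/forallP]. Qed.

Lemma sum_lehmer_code c : (forall k : 'I_m, c k < m - k) ->
  \sum_(k < m) c k + \sum_(k < m) (m - k.+1 - c k) = 'C(m, 2).
Proof.
move=> c_lt; rewrite -big_split -sum_rev_ord; apply: eq_bigr => k _ /=.
by have := c_lt k; lia.
Qed.

Lemma composition_of_code_lift c k : (forall k : 'I_m, c k < m - k) ->
  composition_of_code c (lift ord0 k) = m - k.+1 - c k :> nat.
Proof. by move=> c_lt; rewrite ffunE liftK inordK //; have := bin2S m; lia. Qed.

Lemma composition_of_code0 c : (forall k : 'I_m, c k < m - k) ->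
  composition_of_code c ord0 = m + \sum_(k < m) c k :> nat.
Proof.
move=> c_lt; rewrite ffunE unlift_none inordK //.
by have := sum_lehmer_code c_lt; have := bin2S m; lia.
Qed.

Lemma code_of_composition_in j :
  j \in bounded_compositions m t -> code_of_composition j \in lehmer_codes_le m t.
Proof.
case/bounded_compositionsP => j_sum j0_le j_le; rewrite !inE; apply/andP; split.
  by apply/forallP => k; rewrite code_of_compositionE; have := ltn_ord k; lia.
move: j_sum; rewrite big_ord_recl.
set L := (X in _ + X = _); set P := (X in _ -> X <= t).
have sum_c : P + L = 'C(m, 2).
  rewrite -big_split -[RHS]sum_rev_ord; apply: eq_bigr => k _ /=.
  by rewrite code_of_compositionE subnK // j_le.
by have := bin2S m; lia.
Qed.

Lemma composition_of_code_in c :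
  c \in lehmer_codes_le m t -> composition_of_code c \in bounded_compositions m t.
Proof.
case/lehmer_codes_leP => c_lt c_sum; rewrite inE; apply/andP; split.
  rewrite big_ord_recl composition_of_code0 //.
  rewrite (eq_bigr _ (fun k _ => composition_of_code_lift k c_lt)).
  by rewrite -addnA sum_lehmer_code // bin2S addnC.
apply/forallP => i; rewrite /binom_top; case: (unliftP ord0 i) => [k ->|->].
  by rewrite composition_of_code_lift // lift0 /=; lia.
by rewrite composition_of_code0 //= addnC leq_add2r.
Qed.

Lemma code_of_composition_inj :
  {in bounded_compositions m t &, injective code_of_composition}.
Proof.
move=> j1 j2 /bounded_compositionsP[j1_sum _ j1_le] /bounded_compositionsP[j2_sum _ j2_le].
move=> /ffunP eq_code.
have eq_lift (k : 'I_m) : j1 (lift ord0 k) = j2 (lift ord0 k) :> nat.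
  apply/eqP; have /eqP := congr1 (@nat_of_ord m) (eq_code k).
  by rewrite !code_of_compositionE eqn_sub2lE ?j1_le ?j2_le.
apply/ffunP => i; apply: ord_inj; case: (unliftP ord0 i) => [k ->|->]; first exact: eq_lift.
have := etrans j1_sum (esym j2_sum).
by rewrite !big_ord_recl (eq_bigr _ (fun k _ => eq_lift k)) => /addIn.
Qed.

Lemma composition_of_codeK :
  {in lehmer_codes_le m t, cancel composition_of_code code_of_composition}.
Proof.
move=> c /lehmer_codes_leP[c_lt _]; apply/ffunP => k; apply: ord_inj.
have c_le : c k <= m - k.+1 by rewrite leq_subRL // addSn -ltn_subRL c_lt.
by rewrite code_of_compositionE composition_of_code_lift // subKn.
Qed.

Lemma card_bounded_compositions :
  #|bounded_compositions m t| = #|lehmer_codes_le m t|.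
Proof.
apply/eqP; rewrite eqn_leq; apply/andP; split.
  rewrite -(card_in_imset code_of_composition_inj); apply: subset_leq_card.
  by apply/subsetP => c /imsetP[j j_in ->]; apply: code_of_composition_in.
rewrite -(card_in_imset (can_in_inj composition_of_codeK)); apply: subset_leq_card.
by apply/subsetP => j /imsetP[c c_in ->]; apply: composition_of_code_in.
Qed.

End CompositionsToCodes.

Theorem proposition6p5 (n t : nat) :
  (2 <= n)%N ->
  #|Splus n (Nvec n t)| = Jperm n.-1 t /\
  (('C(n.-1, 2) <= t)%N -> #|Splus n (Nvec n t)| = (n.-1)`!).
Proof.
case: n => [//|m] _ /=.
have card_Splus : #|Splus m.+1 (Nvec m.+1 t)| = Jperm m t.
  by rewrite Splus_Nvec card_bounded_compositions Jperm_lehmer.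
split => // le_bin_t; rewrite card_Splus /Jperm -card_Sn.
by apply: eq_card => s; rewrite inE (leq_trans (inv_count_le s) le_bin_t).
Qed.
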